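(* Let $({\mathbf\Lambda}^\star,{\mathbf V}^\star)$ with ${\mathbf\Lambda}^\star,{\mathbf V}^\star\ge0$ be a minimizer of $F$ over pairs of entrywise nonnegative matrices. Then $\mathcal U_s(\pi_{{\mathbf\Lambda}^\star,{\mathbf V}^\star},\ell)\le\epsilon_s$ for all $s\in[K]$ and $\ell\in[\![L]\!]$.
   Context: Let $K\ge 2$, $d\ge1$, and let $(X,S,Y)$ be a random triple with values in $\mathbb R^d\times[K]\times\mathbb R$, $\mathbb E[Y^2]<\infty$. Put $\eta(x)=\mathbb E[Y\mid X=x]$, $p_s=\mathbb P(S=s)>0$, $\tau_s(x)=\mathbb P(S=s\mid X=x)$, $t_s(x)=1-\tau_s(x)/p_s$, $\mathbf t(x)=(t_s(x))_{s\in[K]}$. Fix $B>0$, $L\in\mathbb N$, $\beta>0$, $\boldsymbol\epsilon=(\epsilon_s)\in[0,1]^K$; $[\![L]\!]=\{-L,\dots,L\}$, $r_\ell(x)=(\eta(x)-\ell B/L)^2$. For a prediction $\pi$ supported on the grid $\{\ell B/L:\ell\in[\![L]\!]\}$ (i.e. a Markov kernel with $\pi(\ell\mid x)$ the mass at $\ell B/L$), $\mathcal U_s(\pi,\ell)=|\mathbb E[\pi(\ell\mid X)\mid S=s]-\mathbb E[\pi(\ell\mid X)]|$. $\mathrm{LSE}_\beta(\mathbf w)=\beta^{-1}\log\sum_j e^{\beta w_j}$, $\sigma_j(\mathbf w)=e^{w_j}/\sum_ie^{w_i}$. For ${\mathbf\Lambda}=(\lambda_{\ell s}),{\mathbf V}=(\nu_{\ell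 s})$ with rows $\boldsymbol\lambda_\ell,\boldsymbol\nu_\ell\in\mathbb R^K$: $F({\mathbf\Lambda},{\mathbf V})=\mathbb E\big[\mathrm{LSE}_\beta\big((\langle\boldsymbol\lambda_\ell-\boldsymbol\nu_\ell,\mathbf t(X)\rangle-r_\ell(X))_{\ell\in[\![L]\!]}\big)\big]+\sum_{\ell}\langle\boldsymbol\lambda_\ell+\boldsymbol\nu_\ell,\boldsymbol\epsilon\rangle$, and $\pi_{{\mathbf\Lambda},{\mathbf V}}(\ell\mid x)=\sigma_\ell\big(\beta(\langle\boldsymbol\lambda_{\ell'}-\boldsymbol\nu_{\ell'},\mathbf t(x)\rangle-r_{\ell'}(x))_{\ell'\in[\![L]\!]}\big)$. *)

From HB Require Import structures.
From mathcomp Require Import all_boot all_order all_algebra.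
From mathcomp Require Import all_classical all_reals all_analysis.
Set Implicit Arguments. Unset Strict Implicit. Unset Printing Implicit Defensive.
Import Order.TTheory GRing.Theory Num.Theory.
Local Open Scope classical_set_scope.
Local Open Scope ring_scope.

Section Defs.
Context {R : realType} {dT : measure_display} {T : measurableType dT}.
Context {dV : measure_display} {V : measurableType dV}.

(* g is a version of x |-> E[Z | X = x]: g is measurable, g(X) is integrable,
   and E[Z 1_{X in A}] = E[g(X) 1_{X in A}] for every measurable A. *)
Definition is_cond_exp_fun (P : probability T R) (X : T -> V) (Z : T -> R)
  (g : V -> R) : Prop :=
  measurable_fun setT g /\
  P.-integrable setT (fun w => (g (X w))%:E) /\
  forall A : set V, measurable A ->
    (\int[P]_(w in X @^-1` A) (Z w)%:E = \int[P]_(w in X @^-1` A) (g (X w))%:E)%E.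

End Defs.

Section Fair.
Context {R : realType}.

Definition ind_eq (K : nat) (s : 'I_K) (k : 'I_K) : R := (k == s)%:R.

(* grid point  l B / L  for the index  i : 'I_(2L+1)  with  l = i - L *)
Definition grid (L : nat) (B : R) (i : 'I_(2 * L + 1)) : R :=
  ((i%:R - L%:R) * B) / L%:R.

Definition rloss (X : Type) (eta : X -> R) (L : nat) (B : R)
  (i : 'I_(2 * L + 1)) (x : X) : R := (eta x - grid B i) ^+ 2.

Definition tfun (X : Type) (K : nat) (tau : 'I_K -> X -> R) (p : 'I_K -> R)
  (s : 'I_K) (x : X) : R := 1 - tau s x / p s.

Definition score (X : Type) (K L : nat) (eta : X -> R) (B : R)
  (tau : 'I_K -> X -> R) (p : 'I_K -> R)
  (Lam Nu : 'M[R]_(2 * L + 1, K)) (x : X) (i : 'I_(2 * L + 1)) : R :=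
  \sum_(s < K) (Lam i s - Nu i s) * tfun tau p s x - rloss eta B i x.

Definition LSE (n : nat) (beta : R) (w : 'I_n -> R) : R :=
  beta^-1 * ln (\sum_(j < n) expR (beta * w j)).

Definition softmax (n : nat) (w : 'I_n -> R) (j : 'I_n) : R :=
  expR (w j) / \sum_(i < n) expR (w i).

Definition pi_LV (X : Type) (K L : nat) (eta : X -> R) (B beta : R)
  (tau : 'I_K -> X -> R) (p : 'I_K -> R)
  (Lam Nu : 'M[R]_(2 * L + 1, K)) (x : X) (i : 'I_(2 * L + 1)) : R :=
  softmax (fun j => beta * score eta B tau p Lam Nu x j) i.

Definition nonneg_mx (m n : nat) (M : 'M[R]_(m, n)) : Prop :=
  forall i j, 0 <= M i j.

End Fair.

Section Prob.
Context {R : realType} {d : measure_display} {T : measurableType d}.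

Definition pS (P : probability T R) (K : nat) (S : T -> 'I_K) (s : 'I_K) : R :=
  fine (P [set w | S w = s]).

Definition Fobj (P : probability T R) (n : nat) (X : T -> n.-tuple R)
  (K L : nat) (S : T -> 'I_K) (eta : n.-tuple R -> R) (B beta : R)
  (tau : 'I_K -> n.-tuple R -> R) (eps : 'I_K -> R)
  (Lam Nu : 'M[R]_(2 * L + 1, K)) : \bar R :=
  (\int[P]_w (LSE beta (score eta B tau (pS P S) Lam Nu (X w)))%:E
   + (\sum_(i < 2 * L + 1) \sum_(s < K) (Lam i s + Nu i s) * eps s)%:E)%E.

Definition Ufair (P : probability T R) (n : nat) (X : T -> n.-tuple R)
  (K : nat) (S : T -> 'I_K) (g : n.-tuple R -> R) (s : 'I_K) : \bar R :=
  (`| (\int[P]_(w in [set w | S w = s]) (g (X w))%:E) * ((pS P S s)^-1)%:E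
       - \int[P]_w (g (X w))%:E |)%E.

End Prob.

(* At a minimizer, raising a single entry lambda_{l s} or nu_{l s} by h >= 0 keeps
   the pair admissible, so F does not decrease. The log-sum-exp term moves by at
   most +-h E[t_s(X) pi(l|X)] + O(h^2) (its gradient is the softmax pi), while the
   penalty grows by h eps_s; letting h -> 0 gives |E[t_s(X) pi(l|X)]| <= eps_s.
   Since tau_s(X) = E[1_{S = s} | X] and pi(l|X) is a bounded function of X,
   E[t_s(X) pi(l|X)] = E[pi(l|X)] - E[pi(l|X) | S = s], whose absolute value is
   U_s(pi, l). The same tower property, applied to truncations of eta and tau_s,
   shows that eta(X) and tau_s(X) are square integrable, so F is finite. *)

From HB Require Import structures.
From mathcomp Require Import all_boot all_order all_algebra.
From mathcomp Require Import all_classical all_reals all_analysis.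
From mathcomp Require Import measurable_realfun.
From mathcomp Require Import ring lra.
Import Order.TTheory GRing.Theory Num.Theory.
Import HBNNSimple.
Local Open Scope classical_set_scope.
Local Open Scope ring_scope.

Section real_integrable.
Context {d : measure_display} {T : measurableType d} {R : realType}.
Context {mu : {measure set T -> \bar R}}.
Local Notation integrable f := (mu.-integrable setT (EFin \o f)).

Lemma integrableD_real {f g : T -> R} : integrable f -> integrable g ->
  integrable (fun w => f w + g w).
Proof.
move=> If Ig; apply: (eq_integrable _ ((EFin \o f) \+ (EFin \o g))%E) => //.
exact: integrableD.
Qed.

Lemma integrableZl_real (k : R) {f : T -> R} : integrable f ->
  integrable (fun w => k * f w).
Proof.
move=> If; apply: (eq_integrable _ (fun w => k%:E * (EFin \o f) w)%E) => //.
exact: integrableZl.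
Qed.

Lemma integrable_sum_real {m : nat} {F : 'I_m -> T -> R} :
  (forall k, integrable (F k)) -> integrable (fun w => \sum_(k < m) F k w).
Proof.
move=> IF; apply: (eq_integrable _ (fun w => \sum_(k < m) (EFin \o F k) w)%E) => //.
  by move=> w _ /=; rewrite sumEFin.
exact: integrable_sum.
Qed.

Lemma integrable_le_real {f g : T -> R} : measurable_fun setT f ->
  (forall w, `|f w| <= g w) -> integrable g -> integrable f.
Proof.
move=> mf fg; apply: (@le_integrable _ _ _ mu setT measurableT _ (EFin \o g)).
  exact/measurable_EFinP.
by move=> w _ /=; rewrite lee_fin (le_trans (fg w) (ler_norm _)).
Qed.

Lemma integrable_mul_bounded {f g : T -> R} {M : R} : integrable f ->
  measurable_fun setT g -> (forall w, `|g w| <= M) ->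
  mu.-integrable setT (fun w => (f w * g w)%:E).
Proof.
move=> If mg gM.
have gb : [bounded g w | w in setT].
  by exists M; split => [|N MN w _]; [exact: num_real | exact: le_trans (ltW MN)].
apply: eq_integrable (integrableMr _ mg gb If) => // w _ /=.
by rewrite -EFinM mulrC.
Qed.

Lemma integral_EFin_Rintegral {f : T -> R} : integrable f ->
  (\int[mu]_w (f w)%:E)%E = (\int[mu]_w f w)%:E.
Proof. by move=> If; rewrite fineK //; exact: integrable_fin_num. Qed.

End real_integrable.

Section conditional_expectation.
Context {R : realType} {d : measure_display} {T : measurableType d}.
Context {dV : measure_display} {V : measurableType dV}.
Variables (P : probability T R) (X : T -> V).
Hypothesis mX : measurable_fun setT X.

Local Notation integrable f := (P.-integrable setT (EFin \o f)).

Lemma integral_mul_indic_preimage (f : T -> R) (B : set V) (c : R) :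
  integrable f -> measurable B ->
  (\int[P]_w (f w * (c * \1_B (X w)))%:E =
   c%:E * \int[P]_(w in X @^-1` B) (f w)%:E)%E.
Proof.
move=> If mB; have mXB : measurable (X @^-1` B) by rewrite -[_ @^-1` _]setTI; exact: mX.
rewrite (integral_mkcond (X @^-1` B)) -integralZl //; last first.
  by apply/(integrable_mkcond _ mXB).1; exact: integrableS If.
apply: eq_integral => w _; rewrite /restrict indicE.
have -> : (w \in X @^-1` B) = (X w \in B) by apply/idP/idP => /set_mem/mem_set.
case: (X w \in B); first by rewrite mulr1 EFinM muleC.
by rewrite !mulr0 mule0.
Qed.

Definition same_cond_exp (f1 f2 : T -> R) : Prop :=
  forall A, measurable A ->
  (\int[P]_(w in X @^-1` A) (f1 w)%:E = \int[P]_(w in X @^-1` A) (f2 w)%:E)%E.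

Section same_cond_exp_theory.
Variables (f1 f2 : T -> R).
Hypotheses (If1 : integrable f1) (If2 : integrable f2)
  (f12 : same_cond_exp f1 f2).

Lemma same_cond_exp_nnsfun (phi : {nnsfun V >-> R}) :
  (\int[P]_w (f1 w * phi (X w))%:E = \int[P]_w (f2 w * phi (X w))%:E)%E.
Proof.
have mphi r : measurable (phi @^-1` [set r]) by exact: measurable_funPTI.
pose s := finmap.enum_fset (fset_set (range phi)).
have phiE (f : T -> R) w : ((f w * phi (X w))%:E =
    \sum_(i < size s) (f w * (s`_i * \1_(phi @^-1` [set s`_i]) (X w)))%:E)%E.
  by rewrite sumEFin -mulr_sumr -fimfunEord.
have Ii (f : T -> R) (i : 'I_(size s)) : integrable f ->
    P.-integrable setT (fun w => (f w * (s`_i * \1_(phi @^-1` [set s`_i]) (X w)))%:E).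
  move=> If; apply: (integrable_mul_bounded (M := `|s`_i|)) => //.
  - apply: measurable_funM; first exact: measurable_cst.
    by apply: measurableT_comp => //; exact: measurable_indic.
  - move=> w; rewrite normrM indicE.
    by case: (_ \in _); rewrite ?normr1 ?normr0 ?mulr1 ?mulr0.
under eq_integral do rewrite phiE.
rewrite integral_sum //; last by move=> i; exact: Ii.
under [RHS]eq_integral do rewrite phiE.
rewrite integral_sum //; last by move=> i; exact: Ii.
by apply: eq_bigr => i _; rewrite !integral_mul_indic_preimage // f12.
Qed.

Lemma same_cond_exp_bounded_ge0 (h : V -> R) (M : R) : measurable_fun setT h ->
  (forall x, 0 <= h x) -> (forall x, h x <= M) ->
  (\int[P]_w (f1 w * h (X w))%:E = \int[P]_w (f2 w * h (X w))%:E)%E.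
Proof.
move=> mh h0 hM.
have mEh : measurable_fun setT (EFin \o h) by exact/measurable_EFinP.
have Eh0 x : [set: V] x -> (0 <= (EFin \o h) x)%E by rewrite lee_fin.
pose phi := nnsfun_approx measurableT mEh.
have cvg_phi (f : T -> R) : integrable f ->
    (\int[P]_w (f w * phi k (X w))%:E)%E @[k --> \oo] -->
    (\int[P]_w (f w * h (X w))%:E)%E.
  move=> If; apply: (@dominated_cvg _ _ _ P setT measurableT _ _
     (fun w => (`|f w| * M)%:E)).
  - move=> k; apply/measurable_EFinP; apply: measurable_funM.
      exact/measurable_EFinP/(measurable_int _ If).
    exact: measurableT_comp.
  - move=> w _; apply: cvg_EFin; first exact: nearW.
    apply: cvgMl_tmp.
    have := cvg_nnsfun_approx measurableT mEh Eh0 (I : setT (X w)).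
    by move/fine_cvg.
  - by [].
  - apply: (eq_integrable _ (fun w => (M%:E * (abse \o (EFin \o f)) w)%E)) => //.
      by move=> w _ /=; rewrite -EFinM mulrC.
    exact/integrableZl/integrable_abse.
  - move=> k w _; rewrite abse_EFin lee_fin normrM ler_wpM2l //.
    rewrite ger0_norm; last exact: fun_ge0.
    have := @le_approx _ _ _ setT _ k (X w) Eh0 I.
    by rewrite -nnsfun_approxE lee_fin => /le_trans; apply.
apply: (cvg_unique _ (cvg_phi _ If1)); first exact: ereal_hausdorff.
rewrite (_ : (fun k => _) = (fun k => \int[P]_w (f2 w * phi k (X w))%:E)%E).
  exact: cvg_phi.
by apply/funext => k; exact: same_cond_exp_nnsfun.
Qed.

Lemma same_cond_exp_bounded {h : V -> R} {M : R} : measurable_fun setT h ->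
  (forall x, `|h x| <= M) ->
  (\int[P]_w (f1 w * h (X w))%:E = \int[P]_w (f2 w * h (X w))%:E)%E.
Proof.
move=> mh hM; have M0 : 0 <= M := le_trans (normr_ge0 _) (hM point).
pose hM2 x := h x + M.
have hM2_ge0 x : 0 <= hM2 x.
  by rewrite /hM2 -lerBlDr sub0r; move: (hM x); rewrite ler_norml => /andP[].
have hM2_le x : hM2 x <= M + M by rewrite /hM2 lerD2r (le_trans (ler_norm _)).
have shift (f : T -> R) : integrable f ->
   (\int[P]_w (f w * h (X w))%:E = \int[P]_w (f w * hM2 (X w))%:E
       - \int[P]_w (f w * cst M (X w))%:E)%E.
  move=> If; rewrite -integralB //.
  - by apply: eq_integral => w _ /=; rewrite -EFinB /hM2 mulrDr addrK.
  - apply: (integrable_mul_bounded (M := M + M)) => //.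
      by apply: measurableT_comp => //; exact: measurable_funD.
    by move=> w; rewrite ger0_norm.
  - by apply: (integrable_mul_bounded (M := M)) => // w /=; rewrite ger0_norm.
have mhM2 : measurable_fun setT hM2 by exact: measurable_funD.
rewrite (shift _ If1) (shift _ If2).
by rewrite (@same_cond_exp_bounded_ge0 hM2 (M + M))
  ?(@same_cond_exp_bounded_ge0 (cst M) M).
Qed.

End same_cond_exp_theory.

Lemma sqr_integrable_integrable (Z : T -> R) : measurable_fun setT Z ->
  P.-integrable setT (fun w => (Z w ^+ 2)%:E) -> integrable Z.
Proof.
move=> mZ IZ2.
apply: (@le_integrable _ _ _ P setT measurableT _ (fun w => (Z w ^+ 2 + 1)%:E)).
- exact/measurable_EFinP.
- move=> w _; rewrite /= lee_fin [X in _ <= X]ger0_norm ?addr_ge0 ?sqr_ge0 //.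
  have := normr_ge0 (Z w); rewrite -real_normK ?num_real //; nra.
- apply: (eq_integrable _ ((fun w => (Z w ^+ 2)%:E) \+ (EFin \o cst 1%R))%E) => //.
  exact/integrableD/finite_measure_integrable_cst.
Qed.

Section square_integrability.
Variables (Z : T -> R) (g : V -> R).
Hypotheses (mZ : measurable_fun setT Z)
  (IZ2 : P.-integrable setT (fun w => (Z w ^+ 2)%:E))
  (Zg : is_cond_exp_fun P X Z g).

Let mg : measurable_fun setT g. Proof. by case: Zg. Qed.

Let trunc (m : nat) (x : V) : R := g x * \1_[set y | `|g y| <= m%:R] x.

Let mtrunc m : measurable_fun setT (trunc m).
Proof.
apply: measurable_funM => //; apply: measurable_indic.
rewrite -[X in measurable X]setTI; apply: measurable_fun_le => //.
exact: measurableT_comp.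
Qed.

Let trunc_bound m x : `|trunc m x| <= m%:R.
Proof.
rewrite /trunc indicE; case: (boolP (x \in _)) => [/set_mem/= gm|_].
  by rewrite mulr1.
by rewrite mulr0 normr0.
Qed.

Let mul_trunc m x : g x * trunc m x = trunc m x ^+ 2.
Proof. by rewrite /trunc indicE; case: (_ \in _); rewrite ?mulr1 ?mulr0 expr2 ?mulr0. Qed.

Lemma cond_exp_trunc_sqr_le m :
  (\int[P]_w (trunc m (X w) ^+ 2)%:E <= \int[P]_w (Z w ^+ 2)%:E)%E.
Proof.
have IZ := @sqr_integrable_integrable Z mZ IZ2.
have [_ [IgX ZgX]] := Zg.
have mtX : measurable_fun setT (trunc m \o X) := measurableT_comp (mtrunc m) mX.
have IZt : P.-integrable setT (fun w => (Z w * trunc m (X w))%:E).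
  exact: (integrable_mul_bounded IZ mtX (fun w => trunc_bound m (X w))).
have It2 : P.-integrable setT (fun w => (trunc m (X w) ^+ 2)%:E).
  apply: (eq_integrable _ (fun w => (g (X w) * trunc m (X w))%:E)) => //.
    by move=> w _; rewrite /= mul_trunc.
  exact: (integrable_mul_bounded IgX mtX (fun w => trunc_bound m (X w))).
(* E[trunc(X)^2] = E[g(X) trunc(X)] = E[Z trunc(X)] <= (E[Z^2] + E[trunc(X)^2]) / 2 *)
have t2E : (\int[P]_w (trunc m (X w) ^+ 2)%:E = \int[P]_w (Z w * trunc m (X w))%:E)%E.
  rewrite (same_cond_exp_bounded _ _ IZ IgX ZgX (mtrunc m) (trunc_bound m)).
  by apply: eq_integral => w _; rewrite /= mul_trunc.
have amgm : (2%:E * \int[P]_w (Z w * trunc m (X w))%:E <=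
    \int[P]_w (Z w ^+ 2)%:E + \int[P]_w (trunc m (X w) ^+ 2)%:E)%E.
  rewrite -integralZl // -integralD //; apply: le_integral => //.
  - exact: integrableZl.
  - exact: integrableD.
  - move=> w _; rewrite -EFinM -EFinD lee_fin.
    have := sqr_ge0 (Z w - trunc m (X w)); nra.
move: amgm; rewrite -t2E.
rewrite -(fineK (integrable_fin_num measurableT It2)).
rewrite -(fineK (integrable_fin_num measurableT IZ2)).
rewrite -EFinM -EFinD !lee_fin; lra.
Qed.

Lemma cond_exp_sqr_integrable :
  P.-integrable setT (fun w => (g (X w) ^+ 2)%:E).
Proof.
apply/integrableP; split.
  exact/measurable_EFinP/measurable_funX/measurableT_comp.
have -> : (\int[P]_w `|(g (X w) ^+ 2)%:E| =
    \int[P]_w limn (fun m => (trunc m (X w) ^+ 2)%:E))%E.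
  apply: eq_integral => w _ /=; rewrite ger0_norm ?sqr_ge0 //.
  apply/esym/lim_near_cst => //; exists (Num.truncn `|g (X w)|).+1 => // m /= Hm.
  rewrite -mul_trunc /trunc indicE mem_set ?mulr1 //=.
  by apply/ltW/(lt_le_trans (truncnS_gt _)); rewrite ler_nat.
apply: (@le_lt_trans _ _ (\int[P]_w (Z w ^+ 2)%:E)%E); last exact: integrable_lty.
apply: (cvge_to_le (cvg_monotone_convergence _ _ _ _)) => //.
- move=> m; apply/measurable_EFinP/measurable_funX.
  exact: measurableT_comp (mtrunc m) mX.
- by move=> m w _; rewrite lee_fin sqr_ge0.
- move=> w _ k m km; rewrite lee_fin /trunc !indicE.
  case: (boolP (X w \in [set y | `|g y| <= m%:R])) => Hm.
    case: (boolP (X w \in [set y | `|g y| <= k%:R])) => Hk.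
      by rewrite !mulr1.
    by rewrite mulr0 mulr1 expr0n sqr_ge0.
  case: (boolP (X w \in [set y | `|g y| <= k%:R])) => // /set_mem /= Hk.
  by move/negP: Hm; case; apply/mem_set/(le_trans Hk); rewrite ler_nat.
- by apply: nearW => m; exact: cond_exp_trunc_sqr_le.
Qed.

End square_integrability.
End conditional_expectation.

Arguments same_cond_exp_bounded {R d T dV V P X} mX {f1 f2} If1 If2 f12 {h M}.
Arguments cond_exp_sqr_integrable {R d T dV V P X} mX {Z g}.

Section real_inequalities.
Context {R : realType}.

Lemma expR_mul_1Bx_le1 (x : R) : expR x * (1 - x) <= 1.
Proof.
rewrite -[leRHS]expR0 -(subrr x) expRD ler_wpM2l ?expR_ge0 //.
exact: expR_ge1Dx.
Qed.

Lemma expR_le_1DxDsqr (a : R) : a <= 1 -> expR a <= 1 + a + 4 * a ^+ 2.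
Proof.
move=> a1; have [a0|a0] := lerP a 0.
  have q : 0 < 1 - a by lra.
  rewrite -(ler_pM2r q); apply: le_trans (expR_mul_1Bx_le1 a) _.
  have : 0 <= a ^+ 2 * (3 - 4 * a) by apply: mulr_ge0; [exact: sqr_ge0|lra].
  nra.
(* use expR b <= 1 / (1 - b) at b = a / 2, away from its pole at 1 *)
pose b := a / 2; have ab : a = b + b by rewrite /b; field.
have b0 : 0 < b by rewrite /b; lra.
have b1 : b <= 1 / 2 by rewrite /b; lra.
have hb := expR_mul_1Bx_le1 b; have Fb := expR_gt0 b.
rewrite ab expRD -expr2 -(ler_pM2r (exprn_gt0 2 (_ : 0 < 1 - b))); last by lra.
apply: (@le_trans _ _ 1).
  have : 0 <= expR b * (1 - b) by apply: mulr_ge0; lra.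
  by rewrite -exprMn; nra.
have : 0 <= b ^+ 2 * (13 - 30 * b + 16 * b ^+ 2) by apply: mulr_ge0; nra.
nra.
Qed.

Lemma ln_bernoulli_mgf_le (p a : R) : 0 <= p <= 1 ->
  ln (1 + p * (expR a - 1)) <= p * a + 4 * a ^+ 2.
Proof.
move=> /andP[p0 p1]; have E0 := expR_gt0 a.
have [a1|a1] := lerP a 1.
  apply: le_trans (le_ln1Dx _) _; first nra.
  by have := @expR_le_1DxDsqr a a1; have := sqr_ge0 a; nra.
have ea : 1 <= expR a by rewrite -expR0 ler_expR; lra.
apply: (@le_trans _ _ a); last nra.
by rewrite -[leRHS]expRK ler_ln ?posrE; nra.
Qed.

Lemma sumr_expR_gt0 {N : nat} (w : 'I_N -> R) (i : 'I_N) :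
  0 < \sum_(j < N) expR (w j).
Proof.
rewrite (bigD1 i) //=; apply: lt_le_trans (expR_gt0 (w i)) _.
by rewrite lerDl; apply: sumr_ge0 => j _; exact: expR_ge0.
Qed.

Lemma softmax_ge0 {N : nat} (w : 'I_N -> R) (i : 'I_N) : 0 <= softmax w i.
Proof. by rewrite divr_ge0 ?expR_ge0 // ltW // (sumr_expR_gt0 _ i). Qed.

Lemma softmax_le1 {N : nat} (w : 'I_N -> R) (i : 'I_N) : softmax w i <= 1.
Proof.
rewrite /softmax ler_pdivrMr ?mul1r ?(sumr_expR_gt0 _ i) //.
by rewrite (bigD1 i) //= lerDl; apply: sumr_ge0 => j _; exact: expR_ge0.
Qed.

Lemma softmax_expR_lnE {N : nat} (w : 'I_N -> R) (i : 'I_N) :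
  softmax w i = expR (w i - ln (\sum_(j < N) expR (w j))).
Proof. by rewrite expRD expRN lnK // posrE (sumr_expR_gt0 _ i). Qed.

Lemma normr_softmax_le1 {N : nat} (w : 'I_N -> R) (i : 'I_N) :
  `|softmax w i| <= 1.
Proof. by rewrite ger0_norm ?softmax_ge0 ?softmax_le1. Qed.

(* A second-order expansion of log-sum-exp, whose gradient is the softmax; any
   constant in front of [beta * h ^+ 2] would do, since only h -> 0 matters. *)
Lemma LSE_add_delta_le {N : nat} (beta : R) (u : 'I_N -> R) (i : 'I_N) (h : R) :
  0 < beta ->
  LSE beta (fun j => u j + (j == i)%:R * h) <=
  LSE beta u + softmax (fun j => beta * u j) i * h + 4 * beta * h ^+ 2.
Proof.
move=> b0; set Z := \sum_(j < N) expR (beta * u j).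
have Z0 : 0 < Z := sumr_expR_gt0 _ i.
set q := softmax (fun j => beta * u j) i.
have q01 : 0 <= q <= 1 by rewrite softmax_ge0 softmax_le1.
have qZ : q * Z = expR (beta * u i) by rewrite /q /softmax -/Z mulfVK ?gt_eqF.
have mix0 : 0 < 1 + q * (expR (beta * h) - 1).
  by have := expR_gt0 (beta * h); case/andP: q01 => ? ?; nra.
have ZE : \sum_(j < N) expR (beta * (u j + (j == i)%:R * h)) =
    Z * (1 + q * (expR (beta * h) - 1)).
  have -> : Z * (1 + q * (expR (beta * h) - 1)) =
      Z + expR (beta * u i) * (expR (beta * h) - 1) by rewrite -qZ; ring.
  rewrite /Z (bigD1 i) //= [in RHS](bigD1 i) //= eqxx mul1r.
  rewrite (eq_bigr (fun j => expR (beta * u j))); last first.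
    by move=> j /negbTE ->; rewrite mul0r addr0.
  by rewrite mulrDr expRD; ring.
rewrite /LSE ZE lnM ?posrE // mulrDr -addrA lerD2l.
rewrite -(ler_pM2l b0) mulrA mulfV ?gt_eqF // mul1r.
apply: le_trans (ln_bernoulli_mgf_le q (beta * h) q01) _.
by rewrite le_eqVlt; apply/orP; left; apply/eqP; ring.
Qed.

Lemma normr_LSE_le {N : nat} (beta : R) (u : 'I_N -> R) (i : 'I_N) :
  0 < beta -> `|LSE beta u| <= \sum_(j < N) `|u j| + ln N%:R / beta.
Proof.
move=> b0; set A := \sum_(j < N) `|u j|.
have uA j : `|u j| <= A.
  by rewrite /A (bigD1 j) //= lerDl; apply: sumr_ge0 => k _; exact: normr_ge0.
set Z := \sum_(j < N) expR (beta * u j).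
have Z0 : 0 < Z := sumr_expR_gt0 _ i.
have lnN : 0 <= ln (N%:R : R) / beta.
  apply: divr_ge0; last exact: ltW.
  by apply: ln_ge0; rewrite ler1n (leq_ltn_trans (leq0n i) (ltn_ord i)).
have lnZ_ge : beta * u i <= ln Z.
  rewrite -[leLHS]expRK ler_ln ?posrE ?expR_gt0 //.
  by rewrite /Z (bigD1 i) //= lerDl; apply: sumr_ge0 => j _; exact: expR_ge0.
have lnZ_le : ln Z <= ln N%:R + beta * A.
  rewrite -[leRHS]expRK ler_ln ?posrE ?expR_gt0 // expRD lnK ?posrE ?ltr0n;
    last exact: (leq_ltn_trans (leq0n i) (ltn_ord i)).
  apply: (@le_trans _ _ (\sum_(j < N) expR (beta * A))).
    apply: ler_sum => j _; rewrite ler_expR ler_pM2l //.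
    exact: le_trans (ler_norm _) (uA j).
  by rewrite sumr_const card_ord mulr_natl.
have uiA : - A <= u i by rewrite lerNl (le_trans _ (uA i)) // -normrN ler_norm.
rewrite /LSE -/Z ler_norml; apply/andP; split.
  by rewrite ler_pdivlMl //; nra.
rewrite ler_pdivrMl // mulrDr mulrCA mulfV ?gt_eqF // mulr1; lra.
Qed.

Lemma first_order_ge0 {a c : R} : 0 <= c ->
  (forall h, 0 < h -> 0 <= h * a + h ^+ 2 * c) -> 0 <= a.
Proof.
move=> c0 H; rewrite leNgt; apply/negP => a0.
have c1 : 0 < c + 1 by lra.
pose h := - a / (c + 1).
have h0 : 0 < h by rewrite divr_gt0 // oppr_gt0.
have e : h * c + h = - a by rewrite /h; field; rewrite gt_eqF.
by have := H h h0; nra.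
Qed.

End real_inequalities.

Section fair_minimizer.
Context {R : realType} {dT : measure_display} {T : measurableType dT}.
Variables (P : probability T R) (K n : nat) (X : T -> n.-tuple R)
  (S : T -> 'I_K) (Y : T -> R) (eta : n.-tuple R -> R)
  (tau : 'I_K -> n.-tuple R -> R) (B : R) (L : nat) (beta : R)
  (eps : 'I_K -> R).
Hypotheses (mX : measurable_fun setT X)
  (mS : forall s, measurable [set w | S w = s])
  (mY : measurable_fun setT Y)
  (IY2 : P.-integrable setT (fun w => (Y w ^+ 2)%:E))
  (ceY : is_cond_exp_fun P X Y eta)
  (ceS : forall s, is_cond_exp_fun P X (fun w => ind_eq s (S w)) (tau s))
  (beta_gt0 : 0 < beta).

Local Notation p := (pS P S).
Local Notation integrable f := (P.-integrable setT (EFin \o f)).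
Local Notation t := (tfun tau p).
Local Notation sc := (score eta B tau p).
Local Notation pi Lam Nu i := (fun x => pi_LV eta B beta tau p Lam Nu x i).
Local Notation mx := 'M[R]_(2 * L + 1, K).
Local Notation F := (Fobj P X S eta B beta tau eps).

Lemma ind_eqE s w : ind_eq s (S w) = \1_[set w | S w = s] w :> R.
Proof.
rewrite /ind_eq indicE.
have -> : (w \in [set w | S w = s]) = (S w == s) => //.
by apply/idP/idP => [/set_mem ->//|/eqP]; exact/mem_set.
Qed.

Let meta : measurable_fun setT eta. Proof. by case: ceY. Qed.
Let mtau s : measurable_fun setT (tau s). Proof. by case: (ceS s). Qed.

Let mind s : measurable_fun setT (fun w => ind_eq s (S w) : R).
Proof. by rewrite (funext (ind_eqE s)); exact: measurable_indic. Qed.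

Let ind_bound s w : `|ind_eq s (S w) : R| <= 1.
Proof. by rewrite /ind_eq; case: (_ == _); rewrite ?normr1 ?normr0. Qed.

Let mt s : measurable_fun setT (t s).
Proof. by apply: measurable_funB => //; exact: measurable_funM. Qed.

Let mscore (Lam Nu : mx) j : measurable_fun setT (fun x => sc Lam Nu x j).
Proof.
apply: measurable_funB; last by apply: measurable_funX; exact: measurable_funB.
by apply: measurable_sum => k; exact: measurable_funM.
Qed.

Let msum_expR (Lam Nu : mx) :
  measurable_fun setT (fun x => \sum_j expR (beta * sc Lam Nu x j)).
Proof.
apply: measurable_sum => j; apply: measurableT_comp; first exact: measurable_expR.
exact: measurable_funM.
Qed.

Let mLSE (Lam Nu : mx) : measurable_fun setT (fun x => LSE beta (sc Lam Nu x)).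
Proof.
apply: measurable_funM => //.
by apply: measurableT_comp; [exact: measurable_ln | exact: msum_expR].
Qed.

Let mpi (Lam Nu : mx) i : measurable_fun setT (pi Lam Nu i).
Proof.
rewrite (_ : pi Lam Nu i = fun x => expR (beta * sc Lam Nu x i -
    ln (\sum_j expR (beta * sc Lam Nu x j)))).
  apply: measurableT_comp; first exact: measurable_expR.
  apply: measurable_funB; first exact: measurable_funM.
  by apply: measurableT_comp; [exact: measurable_ln | exact: msum_expR].
by apply/funext => x; rewrite /pi_LV softmax_expR_lnE.
Qed.

Let Iconst (c : R) : integrable (cst c).
Proof. exact: finite_measure_integrable_cst. Qed.

Let mulr_pi_integrable (Lam Nu : mx) i {f : T -> R} : integrable f ->
  integrable (fun w => f w * pi Lam Nu i (X w)).
Proof.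
move=> If; apply: (integrable_mul_bounded If (measurableT_comp (mpi Lam Nu i) mX)).
by move=> w; exact: normr_softmax_le1.
Qed.

Let Iind s : integrable (fun w => ind_eq s (S w) : R).
Proof. exact: integrable_le_real (mind s) (ind_bound s) (Iconst 1). Qed.

Let ItauX s : integrable (fun w => tau s (X w)).
Proof. by case: (ceS s) => _ []. Qed.

Let ItauX_sqr s : integrable (fun w => tau s (X w) ^+ 2).
Proof.
apply: (cond_exp_sqr_integrable mX (mind s) _ (ceS s)).
apply: (integrable_le_real _ _ (Iconst 1)); first exact: measurable_funX.
by move=> w; rewrite normrX exprn_ile1.
Qed.

Let It s : integrable (fun w => t s (X w)).
Proof.
apply: (eq_integrable _ (EFin \o (fun w => 1 + (- (p s)^-1) * tau s (X w)))) => //.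
  by move=> w _ /=; rewrite /tfun mulNr mulrC.
by apply: integrableD_real; [exact: Iconst | exact: integrableZl_real].
Qed.

Let It_sqr s : integrable (fun w => t s (X w) ^+ 2).
Proof.
apply: (integrable_le_real (g := fun w => 2 + 2 * (p s)^-1 ^+ 2 * tau s (X w) ^+ 2)).
- exact/measurable_funX/measurableT_comp.
- move=> w; rewrite ger0_norm ?sqr_ge0 // /tfun.
  have -> : 2 * (p s)^-1 ^+ 2 * tau s (X w) ^+ 2 = 2 * (tau s (X w) / p s) ^+ 2.
    by ring.
  by have := sqr_ge0 (1 + tau s (X w) / p s); nra.
- by apply: integrableD_real; [exact: Iconst | exact: integrableZl_real].
Qed.

Let Irloss (j : 'I_(2 * L + 1)) : integrable (fun w => rloss eta B j (X w)).
Proof.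
have IetaX_sqr := cond_exp_sqr_integrable mX mY IY2 ceY.
apply: (integrable_le_real
  (g := fun w => 2 * eta (X w) ^+ 2 + 2 * grid B j ^+ 2)).
- apply: measurableT_comp mX; apply: measurable_funX.
  exact: measurable_funB.
- move=> w; rewrite ger0_norm ?sqr_ge0 // /rloss.
  by have := sqr_ge0 (eta (X w) + grid B j); nra.
- by apply: integrableD_real; [exact: integrableZl_real | exact: Iconst].
Qed.

Let ILSE (Lam Nu : mx) : integrable (fun w => LSE beta (sc Lam Nu (X w))).
Proof.
have i0 : 'I_(2 * L + 1) by exists 0%N; rewrite addn1.
apply: (integrable_le_real (g := fun w => \sum_j
   (\sum_k `|Lam j k - Nu j k| * `|t k (X w)| + rloss eta B j (X w))
   + ln (2 * L + 1)%:R / beta)).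
- exact: measurableT_comp (mLSE Lam Nu) mX.
- move=> w; apply: le_trans (normr_LSE_le _ _ i0 beta_gt0) _.
  rewrite lerD2r; apply: ler_sum => j _.
  apply: le_trans (ler_normB _ _) _; rewrite [X in _ + X]ger0_norm ?sqr_ge0 //.
  rewrite lerD2r; apply: le_trans (ler_norm_sum _ _ _) _.
  by apply: ler_sum => k _; rewrite normrM.
- apply: integrableD_real; last exact: Iconst.
  apply: integrable_sum_real => j.
  apply: integrableD_real => //; apply: integrable_sum_real => k.
  by apply: integrableZl_real; exact: integrable_norm.
Qed.

Definition penalty (Lam Nu : mx) : R :=
  \sum_(j < 2 * L + 1) \sum_(k < K) (Lam j k + Nu j k) * eps k.

Lemma Fobj_Rintegral (Lam Nu : mx) : F Lam Nu =
  (\int[P]_w LSE beta (sc Lam Nu (X w)) + penalty Lam Nu)%:E.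
Proof. by rewrite /Fobj (integral_EFin_Rintegral (ILSE Lam Nu)). Qed.

Lemma sum_delta_mx i s (a : R) j (G : 'I_K -> R) :
  \sum_k (a *: delta_mx i s : mx) j k * G k = (j == i)%:R * (a * G s).
Proof.
rewrite (bigD1 s) //= big1 ?addr0 => [|k /negbTE ks]; rewrite !mxE ?ks ?andbF.
  by rewrite eqxx andbT; case: (j == i); rewrite ?mulr1 ?mul1r ?mulr0 ?mul0r.
by rewrite mulr0 mul0r.
Qed.

Lemma score_add_delta (Lam Nu : mx) i s (a b : R) x j :
  sc (Lam + a *: delta_mx i s) (Nu + b *: delta_mx i s) x j =
  sc Lam Nu x j + (j == i)%:R * ((a - b) * t s x).
Proof.
rewrite /score -(sum_delta_mx i s (a - b) j (t ^~ x)) addrAC -big_split /=.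
by congr (_ - _); apply: eq_bigr => k _; rewrite !mxE; ring.
Qed.

Lemma penalty_add_delta (Lam Nu : mx) i s (a b : R) :
  penalty (Lam + a *: delta_mx i s) (Nu + b *: delta_mx i s) =
  penalty Lam Nu + (a + b) * eps s.
Proof.
have -> : penalty (Lam + a *: delta_mx i s) (Nu + b *: delta_mx i s) =
    \sum_j (\sum_k (Lam j k + Nu j k) * eps k + (j == i)%:R * ((a + b) * eps s)).
  apply: eq_bigr => j _; rewrite -sum_delta_mx -big_split /=.
  by apply: eq_bigr => k _; rewrite !mxE; ring.
rewrite big_split /=; congr (_ + _).
rewrite (bigD1 i) //= big1 ?eqxx ?mul1r ?addr0 // => j /negbTE ->.
by rewrite mul0r.
Qed.

Lemma Fobj_add_delta_le (Lam Nu : mx) i s (a b : R) :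
  (F (Lam + a *: delta_mx i s) (Nu + b *: delta_mx i s) <= F Lam Nu +
    ((a - b) * \int[P]_w (t s (X w) * pi Lam Nu i (X w)) + (a + b) * eps s
     + 4 * beta * (a - b) ^+ 2 * \int[P]_w t s (X w) ^+ 2)%:E)%E.
Proof.
set h := a - b.
have LSE_le w :
    LSE beta (sc (Lam + a *: delta_mx i s) (Nu + b *: delta_mx i s) (X w)) <=
    LSE beta (sc Lam Nu (X w)) + h * (t s (X w) * pi Lam Nu i (X w))
    + 4 * beta * h ^+ 2 * t s (X w) ^+ 2.
  have -> : sc (Lam + a *: delta_mx i s) (Nu + b *: delta_mx i s) (X w) =
      (fun j => sc Lam Nu (X w) j + (j == i)%:R * (h * t s (X w))).
    by apply/funext => j; rewrite score_add_delta.
  apply: le_trans (LSE_add_delta_le _ _ _ _ beta_gt0) _.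
  by rewrite le_eqVlt; apply/orP; left; apply/eqP; rewrite /pi_LV; ring.
have I1 := ILSE Lam Nu.
have I2 := integrableZl_real h (mulr_pi_integrable Lam Nu i (It s)).
have I3 := integrableZl_real (4 * beta * h ^+ 2) (It_sqr s).
have I12 := integrableD_real I1 I2.
have := le_Rintegral measurableT (ILSE _ _) (integrableD_real I12 I3)
  (fun w _ => LSE_le w).
rewrite !Fobj_Rintegral penalty_add_delta -EFinD lee_fin !RintegralD //.
have -> : \int[P]_w (4 * beta * h ^+ 2 * t s (X w) ^+ 2) =
    4 * beta * h ^+ 2 * \int[P]_w t s (X w) ^+ 2.
  exact: RintegralZl _ measurableT (It_sqr s).
have -> : \int[P]_w (h * (t s (X w) * pi Lam Nu i (X w))) =
    h * \int[P]_w (t s (X w) * pi Lam Nu i (X w)).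
  exact: RintegralZl _ measurableT (mulr_pi_integrable Lam Nu i (It s)).
lra.
Qed.

Lemma minimizer_abs_Rintegral_t_pi_le (Lam Nu : mx) :
  nonneg_mx Lam -> nonneg_mx Nu ->
  (forall Lam' Nu' : mx, nonneg_mx Lam' -> nonneg_mx Nu' ->
     (F Lam Nu <= F Lam' Nu')%E) ->
  forall s i, `|\int[P]_w (t s (X w) * pi Lam Nu i (X w))| <= eps s.
Proof.
move=> Lam_ge0 Nu_ge0 Fmin s i.
set A := \int[P]_w (t s (X w) * pi Lam Nu i (X w)).
set Q := \int[P]_w t s (X w) ^+ 2.
have Q_ge0 : 0 <= 4 * beta * Q.
  rewrite !mulr_ge0 ?(ltW beta_gt0) //.
  by apply: Rintegral_ge0 => w _; exact: sqr_ge0.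
have add_delta_ge0 (M : mx) c :
    nonneg_mx M -> 0 <= c -> nonneg_mx (M + c *: delta_mx i s).
  by move=> M_ge0 c_ge0 j k; rewrite !mxE addr_ge0 ?mulr_ge0.
have perturb_ge0 a b : 0 <= a -> 0 <= b ->
    0 <= (a - b) * A + (a + b) * eps s + 4 * beta * (a - b) ^+ 2 * Q.
  move=> a_ge0 b_ge0.
  have := Fmin _ _ (add_delta_ge0 _ _ Lam_ge0 a_ge0) (add_delta_ge0 _ _ Nu_ge0 b_ge0).
  move/le_trans/(_ (Fobj_add_delta_le Lam Nu i s a b)).
  by rewrite Fobj_Rintegral -EFinD lee_fin -/A -/Q; lra.
have lower : 0 <= A + eps s.
  apply: (first_order_ge0 Q_ge0) => h h_gt0.
  by have := perturb_ge0 h 0 (ltW h_gt0) (lexx 0); rewrite subr0 addr0; nra.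
have upper : 0 <= eps s - A.
  apply: (first_order_ge0 Q_ge0) => h h_gt0.
  by have := perturb_ge0 0 h (lexx 0) (ltW h_gt0); rewrite sub0r add0r sqrrN; nra.
by rewrite ler_norml; apply/andP; split; lra.
Qed.

Lemma Ufair_pi_LV (Lam Nu : mx) i s :
  Ufair P X S (pi Lam Nu i) s =
  (`|\int[P]_w (t s (X w) * pi Lam Nu i (X w))|)%:E.
Proof.
have mpiX : measurable_fun setT (fun w => pi Lam Nu i (X w)).
  exact: measurableT_comp (mpi Lam Nu i) mX.
have Ipi : integrable (fun w => pi Lam Nu i (X w)).
  by apply: (integrable_le_real mpiX _ (Iconst 1)) => w; exact: normr_softmax_le1.
have Iind_pi := mulr_pi_integrable Lam Nu i (Iind s).
have Itau_pi := mulr_pi_integrable Lam Nu i (ItauX s).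
have tower : \int[P]_w (ind_eq s (S w) * pi Lam Nu i (X w)) =
    \int[P]_w (tau s (X w) * pi Lam Nu i (X w)).
  have [_ [ItauX' tauE]] := ceS s.
  by rewrite /Rintegral (same_cond_exp_bounded mX (Iind s) ItauX' tauE (mpi Lam Nu i)
    (fun x => normr_softmax_le1 _ i)).
have restrictE : (\int[P]_(w in [set w | S w = s]) (pi Lam Nu i (X w))%:E =
    (\int[P]_w (ind_eq s (S w) * pi Lam Nu i (X w)))%:E)%E.
  rewrite integral_mkcond -(integral_EFin_Rintegral Iind_pi).
  apply: eq_integral => w _; rewrite /restrict ind_eqE indicE.
  by case: (_ \in _); rewrite ?mul1r ?mul0r.
have t_piE : \int[P]_w (t s (X w) * pi Lam Nu i (X w)) = \int[P]_w pi Lam Nu i (X w)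
    - (p s)^-1 * \int[P]_w (tau s (X w) * pi Lam Nu i (X w)).
  rewrite -(RintegralZl _ measurableT Itau_pi) -(RintegralB measurableT Ipi).
    by apply: eq_Rintegral => w _; rewrite /tfun; ring.
  exact: integrableZl_real.
rewrite /Ufair restrictE (integral_EFin_Rintegral Ipi) -EFinM -EFinB abse_EFin.
by rewrite t_piE tower -normrN; congr (`|_|%:E); ring.
Qed.

End fair_minimizer.

Arguments Ufair_pi_LV {R dT T P K n X S Y eta tau B L beta} mX mS ceY ceS.
Arguments minimizer_abs_Rintegral_t_pi_le {R dT T P K n X S Y eta tau B L beta eps}
  mX mS mY IY2 ceY ceS beta_gt0.

Theorem lemma3p2 (R : realType) (dT : measure_display) (T : measurableType dT)
  (P : probability T R) (K n : nat) (X : T -> n.-tuple R) (S : T -> 'I_K)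
  (Y : T -> R) (eta : n.-tuple R -> R) (tau : 'I_K -> n.-tuple R -> R)
  (B : R) (L : nat) (beta : R) (eps : 'I_K -> R)
  (Lam Nu : 'M[R]_(2 * L + 1, K)) :
  (1 < K)%N -> (0 < n)%N ->
  measurable_fun setT X ->
  (forall s, measurable [set w | S w = s]) ->
  measurable_fun setT Y ->
  P.-integrable setT (fun w => (Y w ^+ 2)%:E) ->
  is_cond_exp_fun P X Y eta ->
  (forall s, is_cond_exp_fun P X (fun w => ind_eq s (S w)) (tau s)) ->
  (forall s, (0 < P [set w | S w = s])%E) ->
  0 < B -> (0 < L)%N -> 0 < beta ->
  (forall s, 0 <= eps s <= 1) ->
  nonneg_mx Lam -> nonneg_mx Nu ->
  (forall Lam' Nu' : 'M[R]_(2 * L + 1, K), nonneg_mx Lam' -> nonneg_mx Nu' ->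
     (Fobj P X S eta B beta tau eps Lam Nu
       <= Fobj P X S eta B beta tau eps Lam' Nu')%E) ->
  forall (s : 'I_K) (i : 'I_(2 * L + 1)),
    (Ufair P X S (fun x => pi_LV eta B beta tau (pS P S) Lam Nu x i) s
      <= (eps s)%:E)%E.
Proof.
move=> _ _ mX mS mY IY2 ceY ceS _ _ _ beta_gt0 _ Lam_ge0 Nu_ge0 Fmin s i.
rewrite (Ufair_pi_LV mX mS ceY ceS) lee_fin.
exact: (minimizer_abs_Rintegral_t_pi_le mX mS mY IY2 ceY ceS beta_gt0).
Qed.
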